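(* In the peer prediction mechanism, for every $n\ge 2$ and every strictly proper scoring rule $PS$, the truthful profile $\Sigma^*$ is an ex-ante Bayesian $k_E$-strong equilibrium. Here $$k_E^h=\begin{cases}\left\lfloor \dfrac{(n-1)\,\mathbb E_{s\sim P_\ell}[PS(s,P_\ell)-PS(s,P_h)]}{PS(h,P_h)-PS(\ell,P_h)}\right\rfloor+1 & \text{if } PS(h,P_h)>PS(\ell,P_h),\\ n&\text{otherwise,}\end{cases}$$ $$k_E^\ell=\begin{cases}\left\lfloor \dfrac{(n-1)\,\mathbb E_{s\sim P_h}[PS(s,P_h)-PS(s,P_\ell)]}{PS(\ell,P_\ell)-PS(h,P_\ell)}\right\rfloor+1 & \text{if } PS(\ell,P_\ell)>PS(h,P_\ell),\\ n&\text{otherwise,}\end{cases}$$ and $k_E=\min(k_E^h,k_E^\ell,n)$. Moreover, for every integer $k$ with $k_E<k\le n$, $\Sigma^*$ is not an ex-ante Bayesian $k$-strong equilibrium.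
   Context: Peer prediction setting. There are $n\ge 2$ agents $[n]$. Each agent $i$ privately observes a signal $\Psi_i\in\{\ell,h\}$ and reports $r_i\in\{\ell,h\}$. Signals are drawn from a common prior $Q$ on $\{\ell,h\}^n$ that is symmetric, i.e., invariant under permutations of the agents. $P(s)$ denotes the marginal probability that an agent has signal $s$. $P(s\mid s')$ denotes the probability that another agent $j\ne i$ has signal $s$ given that agent $i$ has signal $s'$. $P_{s'}=P(\cdot\mid s')$ is the corresponding distribution on $\{\ell,h\}$. Standing assumptions: $P(\ell),P(h)>0$, $P(h\mid h)>P(h\mid\ell)$, $P(h\mid\ell)>0$ and $P(\ell\mid h)>0$. A scoring rule $PS:\{\ell,h\}\times\Delta_{\{\ell,h\}}\to\mathbb R$ is strictly proper if $\mathbb E_{s\sim p}[PS(s,p)]>\mathbb E_{s\sim p}[PS(s,q)]$ for all distributions $p\ne q$. The mechanism gives agent $i$ the utility $v_i=\frac1{n-1}\sum_{j\ne i}PS(r_j,P_{r_i})$. A strategy is a pair $\sigma=(\beta_\ell,\beta_h)\in[0,1]^2$, where $\beta_\ell$ and $\beta_h$ are the probabilities of reporting $h$ given signal $\ell$ and signal $h$, respectively. Given signals, reports are drawn independently. The truthful strategy is $(0,1)$, and $\Sigma^*$ is the profile in which all agents play it. The ex-ante utility $u_i(\Sigma)$ is the expectation of $v_i$. The interim utility $u_i(\Sigma\mid s)$ is its expectation conditioned on $\Psi_i=s$. A profile $\Sigma$ is an ex-ante Bayesian $k$-strong equilibrium if there is no set $D\subseteq[n]$ with $|D|\le k$ and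 no profile $\Sigma'$ such that: (1) agents outside $D$ keep their strategies from $\Sigma$; (2) $u_i(\Sigma')\ge u_i(\Sigma)$ for all $i\in D$; and (3) $u_i(\Sigma')>u_i(\Sigma)$ for some $i\in D$. *)

From HB Require Import structures.
From mathcomp Require Import all_boot all_order fingroup perm all_algebra.
From mathcomp Require Import reals.
Set Implicit Arguments. Unset Strict Implicit. Unset Printing Implicit Defensive.
Import Order.TTheory GRing.Theory Num.Theory.
Local Open Scope ring_scope.

(* Conventions: signal/report [true] = h, [false] = l.
   A distribution on {l,h} is represented by its probability of h, a real in [0,1]. *)

Section PeerPrediction.
Variable R : realType.
Variable n : nat.
Hypothesis Hn : (1 < n)%N.

Definition signals := {ffun 'I_n -> bool}.

(* two distinct reference agents, 0 and 1 (the prior is symmetric, so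
   any pair of distinct agents gives the same marginals/conditionals) *)
Definition agent0 : 'I_n := Ordinal (ltnW Hn).
Definition agent1 : 'I_n := Ordinal Hn.

Definition symmetric_prior (Q : signals -> R) : Prop :=
  [/\ forall w, 0 <= Q w,
      \sum_w Q w = 1 &
      forall (pi : {perm 'I_n}) (w : signals), Q [ffun i => w (pi i)] = Q w].

Definition Pmarg (Q : signals -> R) (s : bool) : R :=
  \sum_(w : signals | w agent0 == s) Q w.

Definition Pcond (Q : signals -> R) (s s' : bool) : R :=
  (\sum_(w : signals | (w agent0 == s') && (w agent1 == s)) Q w) / Pmarg Q s'.

(* P_{s'} as a distribution on {l,h}: its probability of h *)
Definition Pdist (Q : signals -> R) (s' : bool) : R := Pcond Q true s'.

Definition Exp (p : R) (f : bool -> R) : R := p * f true + (1 - p) * f false.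

Definition is_dist (p : R) : Prop := 0 <= p <= 1.

Definition strictly_proper (PS : bool -> R -> R) : Prop :=
  forall p q : R, is_dist p -> is_dist q -> p != q ->
    Exp p (fun s => PS s p) > Exp p (fun s => PS s q).

(* A strategy (beta_l, beta_h): probabilities of reporting h given l, resp. h *)
Definition strategy := (R * R)%type.
Definition valid_strategy (b : strategy) : Prop := is_dist b.1 /\ is_dist b.2.
Definition profile := 'I_n -> strategy.
Definition valid_profile (S : profile) : Prop := forall i, valid_strategy (S i).

Definition truthful : strategy := (0, 1).
Definition truthful_profile : profile := fun _ => truthful.

Definition prob_h (b : strategy) (s : bool) : R := if s then b.2 else b.1.

Definition report_prob (S : profile) (w r : signals) : R :=
  \prod_j (if r j then prob_h (S j) (w j) else 1 - prob_h (S j) (w j)).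

Definition payment (Q : signals -> R) (PS : bool -> R -> R) (i : 'I_n) (r : signals) : R :=
  (n.-1)%:R^-1 * \sum_(j | j != i) PS (r j) (Pdist Q (r i)).

Definition exante_utility (Q : signals -> R) (PS : bool -> R -> R)
    (S : profile) (i : 'I_n) : R :=
  \sum_(w : signals) Q w * \sum_(r : signals) report_prob S w r * payment Q PS i r.

Definition kstrong_eq (Q : signals -> R) (PS : bool -> R -> R) (S : profile) (k : int) : Prop :=
  ~ exists (D : {set 'I_n}) (S' : profile),
      [/\ (#|D|%:Z <= k), valid_profile S',
          (forall i, i \notin D -> S' i = S i),
          (forall i, i \in D -> exante_utility Q PS S' i >= exante_utility Q PS S i) &
          (exists2 i, i \in D & exante_utility Q PS S' i > exante_utility Q PS S i)].

Definition kE_h (Q : signals -> R) (PS : bool -> R -> R) : int :=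
  let Pl := Pdist Q false in let Ph := Pdist Q true in
  if PS true Ph > PS false Ph then
    Num.floor ((n.-1)%:R * Exp Pl (fun s => PS s Pl - PS s Ph)
               / (PS true Ph - PS false Ph)) + 1
  else n%:Z.

Definition kE_l (Q : signals -> R) (PS : bool -> R -> R) : int :=
  let Pl := Pdist Q false in let Ph := Pdist Q true in
  if PS false Pl > PS true Pl then
    Num.floor ((n.-1)%:R * Exp Ph (fun s => PS s Ph - PS s Pl)
               / (PS false Pl - PS true Pl)) + 1
  else n%:Z.

Definition kE (Q : signals -> R) (PS : bool -> R -> R) : int :=
  Num.min (kE_h Q PS) (Num.min (kE_l Q PS) n%:Z).

End PeerPrediction.

From HB Require Import structures.
From mathcomp Require Import all_boot all_order fingroup perm all_algebra.
From mathcomp Require Import reals.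
From mathcomp Require Import ring lra.
Import Order.TTheory GRing.Theory Num.Theory.
Local Open Scope ring_scope.
Set Implicit Arguments. Unset Strict Implicit. Unset Printing Implicit Defensive.

(* By symmetry of the prior, the ex-ante utility of agent i is the average, over
   the other agents j, of a pair score that depends only on the strategies of i
   and j.  Against a truthful partner, a deviation of i costs it a loss which is
   positive by strict properness.  A deviating partner raises i's pair score by at
   most a gain term, because PS(h,P_s) - PS(l,P_s) is larger for s = h than for
   s = l.  So in a deviating coalition of size d every member gains at most
   (d-1)*gain - (n-1)*loss; the floors defining k_E^h and k_E^l are exactly the
   thresholds below which this is nonpositive.  Conversely, a coalition of size
   k_E^h + 1 that always reports h (resp. of size k_E^l + 1 that always reports
   l) makes every member strictly better off. *)

Lemma exists_perm2 (T : finType) (i j a b : T) : i != j -> a != b ->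
  exists s : {perm T}, s i = a /\ s j = b.
Proof.
move=> hij hab.
exists (tperm i a * tperm (tperm i a j) b)%g; rewrite !permM.
split; last by rewrite (tpermL (tperm i a j)).
rewrite (tpermL i a) (@tpermD _ (tperm i a j)) 1?eq_sym //.
by apply: contra hij => /eqP; rewrite -[X in X = _](tpermL i a) => /perm_inj ->.
Qed.

Lemma sum_prod_pair (R : comPzRingType) (I : finType) (F : I -> bool -> R)
    (g : bool -> bool -> R) (i j : I) :
  i != j -> (forall k, F k true + F k false = 1) ->
  \sum_(r : {ffun I -> bool}) (\prod_k F k (r k)) * g (r i) (r j) =
  \sum_a \sum_b F i a * F j b * g a b.
Proof.
move=> ij F1; have ji : (j == i) = false by rewrite eq_sym (negbTE ij).
pose G a b k c :=
  F k c * (if k == i then (c == a)%:R else if k == j then (c == b)%:R else 1).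
have marg a b :
    \sum_(r : {ffun I -> bool}) (\prod_k F k (r k)) * ((r i == a) && (r j == b))%:R
    = F i a * F j b.
  transitivity (\sum_(r : {ffun I -> bool}) \prod_k G a b k (r k)).
    apply: eq_bigr => r _; rewrite big_split /=; congr (_ * _).
    rewrite (bigD1 i) //= (bigD1 j) 1?eq_sym //= eqxx ji eqxx.
    rewrite big1 => [|k /andP[/negbTE -> /negbTE ->] //].
    by rewrite mulr1 -mulnb natrM.
  rewrite -bigA_distr_bigA (bigD1 i) //= (bigD1 j) 1?eq_sym //=.
  rewrite [\prod_(_ | _) _]big1 => [|k /andP[/negbTE ki /negbTE kj]]; last first.
    by rewrite big_bool /G /= ki kj !mulr1 F1.
  rewrite !big_bool /G eqxx ji eqxx.
  by case: a; case: b; rewrite /= ?mulr1 ?mulr0 ?addr0 ?add0r.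
have split_g (r : {ffun I -> bool}) : (\prod_k F k (r k)) * g (r i) (r j) =
    \sum_a \sum_b (\prod_k F k (r k)) * ((r i == a) && (r j == b))%:R * g a b.
  rewrite !big_bool.
  by case: (r i); case: (r j); rewrite /= ?mulr1 ?mulr0 ?mul0r ?addr0 ?add0r.
rewrite (eq_bigr _ (fun r _ => split_g r)) exchange_big; apply: eq_bigr => a _.
rewrite exchange_big; apply: eq_bigr => b _.
by rewrite -marg mulr_suml.
Qed.

Lemma sum_neq_const (R : nmodType) (T : finType) (i : T) (c : R) :
  \sum_(j | j != i) c = c *+ #|T|.-1.
Proof. by rewrite sumr_const cardC1. Qed.

Lemma sum_in_neq_const (R : nmodType) (T : finType) (D : {pred T}) (i : T) (c : R) :
  i \in D -> \sum_(j in D | j != i) c = c *+ #|D|.-1.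
Proof.
move=> iD; rewrite sumr_const [#|D|](cardD1 i) iD add1n /=.
by congr (_ *+ _); apply: eq_card => j; rewrite !inE andbC.
Qed.

Lemma sum_distinct_pairs (R : nmodType) (T : finType) (D : {pred T}) (f : T -> R) :
  \sum_(i in D) \sum_(j in D | j != i) f j = (\sum_(j in D) f j) *+ #|D|.-1.
Proof.
rewrite (exchange_big_dep (mem D)) => [|i j _ /andP[]//] /=.
rewrite -sumrMnl; apply: eq_bigr => j jD.
rewrite -(sum_in_neq_const (f j) jD); apply: eq_bigl => i.
by rewrite jD eq_sym.
Qed.

Lemma exists_card_set n d : (d <= n)%N -> exists D : {set 'I_n}, #|D| = d.
Proof.
move=> dn; exists [set widen_ord dn i | i : 'I_d].
rewrite card_imset ?card_ord // => i j /(congr1 val) e; exact: val_inj.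
Qed.

Section FloorThreshold.
Variable R : archiRealFieldType.
Implicit Types (x A B E : R) (k m : int).

Lemma le_floor_succ x (d : nat) : (0 < d)%N ->
  d%:Z <= Num.floor x + 1 -> (d.-1)%:R <= x.
Proof.
by move=> d0; rewrite -[in d%:Z](prednK d0) -addn1 PoszD lerD2r floor_ge_int.
Qed.

Lemma floor_succ_lt x k : 0 <= x -> Num.floor x + 1 < k ->
  exists d : nat, [/\ (0 < d)%N, d%:Z <= k & x < (d.-1)%:R].
Proof.
move=> x0 ltk; have f0 : 0 <= Num.floor x by rewrite floor_ge0.
exists `|Num.floor x|.+2; split => //.
  by rewrite -addn1 PoszD lezD1 -addn1 PoszD gez0_abs.
by have := floorD1_gt x; rewrite -{1}(gez0_abs f0) -PoszD addn1.
Qed.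

Lemma threshold_le A B E m (d : nat) : 0 <= E -> (0 < d)%N ->
  d%:Z <= (if B < A then Num.floor (E / (A - B)) + 1 else m) ->
  (d.-1)%:R * (A - B) <= E.
Proof.
move=> E0 d0; case: (ltP B A) => [ltBA | leAB] hd.
  by rewrite -ler_pdivlMr ?subr_gt0 //; apply: le_floor_succ.
by apply: le_trans E0; rewrite mulr_ge0_le0 ?subr_le0.
Qed.

Lemma threshold_lt A B E m k : 0 <= E -> k <= m ->
  (if B < A then Num.floor (E / (A - B)) + 1 else m) < k ->
  exists d : nat, [/\ (0 < d)%N, d%:Z <= k & E < (d.-1)%:R * (A - B)].
Proof.
move=> E0 km; case: (ltP B A) => [ltBA | _] hk; last by rewrite ltNge km in hk.
have [|d [d0 dk hd]] := floor_succ_lt _ hk; first by rewrite divr_ge0 // subr_ge0 ltW.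
by exists d; split; rewrite // -ltr_pdivrMr ?subr_gt0.
Qed.

End FloorThreshold.

Section ProperScore.
Variables (R : realType) (PS : bool -> R -> R).
Hypothesis PS_proper : strictly_proper PS.

Lemma proper_gap_gt0 p q : is_dist p -> is_dist q -> p != q ->
  0 < Exp p (fun s => PS s p - PS s q).
Proof. by move=> dp dq pq; have := PS_proper dp dq pq; rewrite /Exp; lra. Qed.

Lemma proper_diff_lt p q : is_dist p -> is_dist q -> p < q ->
  PS true p - PS false p < PS true q - PS false q.
Proof.
move=> dp dq pq.
have gp := proper_gap_gt0 dp dq (negbT (lt_eqF pq)).
have gq := proper_gap_gt0 dq dp (negbT (gt_eqF pq)).
have : 0 < (q - p) * ((PS true q - PS false q) - (PS true p - PS false p)).
  by move: gp gq; rewrite /Exp; nra.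
by rewrite pmulr_rgt0 ?subr_gt0.
Qed.

End ProperScore.

Section PeerPrediction.
Variables (R : realType) (n : nat) (Hn : (1 < n)%N) (Q : signals n -> R).
Hypothesis HQ : symmetric_prior Q.

Lemma symmetric_prior_pair (h : bool -> bool -> R) (i j i' j' : 'I_n) :
  i != j -> i' != j' ->
  \sum_w Q w * h (w i) (w j) = \sum_w Q w * h (w i') (w j').
Proof.
move=> ij ij'; have [s [si sj]] := exists_perm2 ij' ij.
case: HQ => _ _ Qperm.
pose f (w : signals n) : signals n := [ffun k => w (s k)].
have finj : injective f.
  by move=> w1 w2 /ffunP e; apply/ffunP => k; have := e (s^-1 k)%g; rewrite !ffunE permKV.
by rewrite [RHS](reindex_inj finj); apply: eq_bigr => w _; rewrite Qperm !ffunE si sj.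
Qed.

Definition joint (s s' : bool) : R :=
  \sum_(w : signals n | (w (agent0 Hn) == s) && (w (agent1 Hn) == s')) Q w.

Lemma joint_ge0 s s' : 0 <= joint s s'.
Proof. by case: HQ => Q0 _ _; apply: sumr_ge0 => w _; apply: Q0. Qed.

Lemma sum_prior_joint (h : bool -> bool -> R) (i j : 'I_n) : i != j ->
  \sum_w Q w * h (w i) (w j) = \sum_s \sum_s' joint s s' * h s s'.
Proof.
move=> ij; rewrite (symmetric_prior_pair h ij (isT : agent0 Hn != agent1 Hn)).
have split_h (w : signals n) : Q w * h (w (agent0 Hn)) (w (agent1 Hn)) =
    \sum_s \sum_s' ((w (agent0 Hn) == s) && (w (agent1 Hn) == s'))%:R * Q w * h s s'.
  by rewrite !big_bool; case: (w _); case: (w _); rewrite /= ?mul1r ?mul0r ?addr0 ?add0r.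
rewrite (eq_bigr _ (fun w _ => split_h w)) exchange_big; apply: eq_bigr => s _.
rewrite exchange_big; apply: eq_bigr => s' _.
rewrite -mulr_suml /joint [in RHS]big_mkcond; congr (_ * _).
by apply: eq_bigr => w _; rewrite mulr_natl mulrb.
Qed.

Lemma PmargE s : Pmarg Hn Q s = \sum_w Q w * (w (agent0 Hn) == s)%:R.
Proof. by rewrite /Pmarg big_mkcond; apply: eq_bigr => w _; rewrite mulr_natr mulrb. Qed.

Lemma Pmarg_row s : Pmarg Hn Q s = joint s true + joint s false.
Proof.
rewrite PmargE (sum_prior_joint (fun x _ => (x == s)%:R) (isT : agent0 Hn != agent1 Hn)).
by rewrite !big_bool; case: s; rewrite /= ?mulr1 ?mulr0 ?addr0 ?add0r.
Qed.

Lemma Pmarg_col s : Pmarg Hn Q s = joint true s + joint false s.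
Proof.
rewrite PmargE (sum_prior_joint (fun _ y => (y == s)%:R) (isT : agent1 Hn != agent0 Hn)).
by rewrite !big_bool; case: s; rewrite /= ?mulr1 ?mulr0 ?addr0 ?add0r.
Qed.

Variable PS : bool -> R -> R.

Definition report_pr (b : strategy R) (s a : bool) : R :=
  if a then prob_h b s else 1 - prob_h b s.

Definition pair_payoff (u v : strategy R) (s s' : bool) : R :=
  \sum_a \sum_b report_pr u s a * report_pr v s' b * PS b (Pdist Hn Q a).

Definition pair_score (u v : strategy R) : R :=
  \sum_s \sum_s' joint s s' * pair_payoff u v s s'.

Lemma sum_report_pair (S : profile R n) (i j : 'I_n) : j != i ->
  \sum_w Q w * \sum_r report_prob S w r * PS (r j) (Pdist Hn Q (r i)) =
  pair_score (S i) (S j).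
Proof.
rewrite eq_sym => ij; rewrite /pair_score -(sum_prior_joint (pair_payoff _ _) ij).
apply: eq_bigr => w _; congr (_ * _); rewrite /pair_payoff.
apply: (@sum_prod_pair _ _ (fun k => report_pr (S k) (w k))
                        (fun a b => PS b (Pdist Hn Q a)) i j ij).
by move=> k; rewrite /report_pr /= subrKC.
Qed.

Lemma exante_utilityE (S : profile R n) (i : 'I_n) :
  exante_utility Hn Q PS S i = (n.-1)%:R^-1 * \sum_(j | j != i) pair_score (S i) (S j).
Proof.
rewrite /exante_utility /payment.
transitivity ((n.-1)%:R^-1 * \sum_w \sum_r \sum_(j | j != i)
    Q w * (report_prob S w r * PS (r j) (Pdist Hn Q (r i)))).
  rewrite [RHS]mulr_sumr; apply: eq_bigr => w _; rewrite !mulr_sumr; apply: eq_bigr => r _.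
  by rewrite !mulr_sumr; apply: eq_bigr => j _; ring.
apply: congr1; under eq_bigr => w _ do rewrite exchange_big.
rewrite exchange_big; apply: eq_bigr => j ji; rewrite -(sum_report_pair S ji).
by apply: eq_bigr => w _; rewrite mulr_sumr.
Qed.

Hypothesis Pmarg_gt0 : forall s, 0 < Pmarg Hn Q s.

Local Notation truth := (truthful R).
Local Notation Pl := (Pdist Hn Q false).
Local Notation Ph := (Pdist Hn Q true).
Local Notation Dl := (Exp Pl (fun s => PS s Pl - PS s Ph)).
Local Notation Dh := (Exp Ph (fun s => PS s Ph - PS s Pl)).

Lemma joint_true s : joint s true = Pmarg Hn Q s * Pdist Hn Q s.
Proof. by rewrite mulrC divfK ?gt_eqF. Qed.

Lemma joint_false s : joint s false = Pmarg Hn Q s * (1 - Pdist Hn Q s).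
Proof. by rewrite mulrBr mulr1 -joint_true Pmarg_row addrC addKr. Qed.

Lemma Pdist_is_dist s : is_dist (Pdist Hn Q s).
Proof.
have q0 := Pmarg_gt0 s; have := joint_ge0 s false; have := joint_ge0 s true.
rewrite joint_false joint_true => h1 h0; apply/andP; split; nra.
Qed.

Definition deviation_loss (u : strategy R) : R :=
  u.1 * Pmarg Hn Q false * Dl + (1 - u.2) * Pmarg Hn Q true * Dh.

Definition partner_gain (v : strategy R) : R :=
  v.1 * Pmarg Hn Q false * (PS true Ph - PS false Ph) +
  (1 - v.2) * Pmarg Hn Q true * (PS false Pl - PS true Pl).

Lemma pair_score_deviation u :
  pair_score u truth - pair_score truth truth = - deviation_loss u.
Proof.
rewrite /pair_score /pair_payoff !big_bool /report_pr /prob_h /= !joint_true !joint_false.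
by rewrite /deviation_loss /Exp; ring.
Qed.

Lemma pair_score_partner_le u v :
  valid_strategy u -> valid_strategy v ->
  PS true Pl - PS false Pl <= PS true Ph - PS false Ph ->
  pair_score u v - pair_score u truth <= partner_gain v.
Proof.
case=> /andP[u10 u11] /andP[u20 u21] [/andP[v10 _] /andP[_ v21]] mono.
set ch := joint false false * u.1 + joint true false * u.2.
set cl := joint false false * (1 - u.1) + joint true false * (1 - u.2).
set ch' := joint false true * u.1 + joint true true * u.2.
set cl' := joint false true * (1 - u.1) + joint true true * (1 - u.2).
have -> : pair_score u v - pair_score u truth =
    v.1 * (ch * (PS true Ph - PS false Ph) + cl * (PS true Pl - PS false Pl)) +
    (1 - v.2) * (ch' * (PS false Ph - PS true Ph) + cl' * (PS false Pl - PS true Pl)).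
  rewrite /pair_score /pair_payoff !big_bool /report_pr /prob_h /ch /cl /ch' /cl' /=; ring.
have jff := joint_ge0 false false; have jtf := joint_ge0 true false.
have jft := joint_ge0 false true; have jtt := joint_ge0 true true.
have col_l : ch + cl = Pmarg Hn Q false by rewrite Pmarg_col /ch /cl; ring.
have col_h : ch' + cl' = Pmarg Hn Q true by rewrite Pmarg_col /ch' /cl'; ring.
have bl : ch * (PS true Ph - PS false Ph) + cl * (PS true Pl - PS false Pl)
    <= Pmarg Hn Q false * (PS true Ph - PS false Ph).
  rewrite -col_l [leRHS]mulrDl lerD2l ler_wpM2l //.
  by rewrite addr_ge0 // mulr_ge0 // subr_ge0.
have bh : ch' * (PS false Ph - PS true Ph) + cl' * (PS false Pl - PS true Pl)
    <= Pmarg Hn Q true * (PS false Pl - PS true Pl).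
  rewrite -col_h [leRHS]mulrDl lerD2r ler_wpM2l ?addr_ge0 ?mulr_ge0 //; lra.
by rewrite /partner_gain -!mulrA; apply: lerD; apply: ler_wpM2l; rewrite ?subr_ge0.
Qed.

Lemma pair_score_pure (c : R) : c = 0 \/ c = 1 ->
  pair_score (c, c) (c, c) - pair_score (c, c) truth = partner_gain (c, c).
Proof.
rewrite /pair_score /pair_payoff /partner_gain !big_bool /report_pr /prob_h /=.
by rewrite !(Pmarg_col false, Pmarg_col true); case=> ->; ring.
Qed.

Lemma exante_utility_gain (S' : profile R n) (i : 'I_n) :
  exante_utility Hn Q PS S' i - exante_utility Hn Q PS (@truthful_profile R n) i =
  (n.-1)%:R^-1 * \sum_(j | j != i) (pair_score (S' i) (S' j) - pair_score truth truth).
Proof. by rewrite !exante_utilityE sumrB mulrBr. Qed.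

Lemma sum_pair_score_sub (D : {set 'I_n}) (S' : profile R n) (i : 'I_n) :
  (forall j, j \notin D -> S' j = truth) ->
  \sum_(j | j != i) (pair_score (S' i) (S' j) - pair_score truth truth) =
  \sum_(j in D | j != i) (pair_score (S' i) (S' j) - pair_score (S' i) truth)
  - deviation_loss (S' i) *+ n.-1.
Proof.
move=> out.
have split j : pair_score (S' i) (S' j) - pair_score truth truth =
    (pair_score (S' i) (S' j) - pair_score (S' i) truth) - deviation_loss (S' i).
  by rewrite -pair_score_deviation; ring.
rewrite (eq_bigr _ (fun j _ => split j)) sumrB sum_neq_const card_ord.
rewrite (bigID (mem D)) /= [X in _ + X - _ = _]big1 ?addr0; last first.
  by move=> j /andP[_ /out ->]; rewrite subrr.
by congr (_ - _); apply: eq_bigl => j; rewrite andbC.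
Qed.

Lemma coalition_gain_le (D : {set 'I_n}) (S' : profile R n) :
  valid_profile S' -> (forall j, j \notin D -> S' j = truth) ->
  PS true Pl - PS false Pl <= PS true Ph - PS false Ph ->
  \sum_(i in D) \sum_(j | j != i) (pair_score (S' i) (S' j) - pair_score truth truth) <=
  \sum_(i in D) (partner_gain (S' i) *+ #|D|.-1 - deviation_loss (S' i) *+ n.-1).
Proof.
move=> valid out mono; rewrite [leRHS]sumrB sumrMnl -sum_distinct_pairs -sumrB.
apply: ler_sum => i _; rewrite (sum_pair_score_sub _ out) lerD2r.
by apply: ler_sum => j _; apply: pair_score_partner_le.
Qed.

Lemma member_gainE (u : strategy R) (d m : nat) :
  partner_gain u *+ d - deviation_loss u *+ m =
  u.1 * Pmarg Hn Q false * (d%:R * (PS true Ph - PS false Ph) - m%:R * Dl) +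
  (1 - u.2) * Pmarg Hn Q true * (d%:R * (PS false Pl - PS true Pl) - m%:R * Dh).
Proof. by rewrite /partner_gain /deviation_loss; ring. Qed.

Lemma predn_gt0 : (0 < n.-1)%N.
Proof. by rewrite -ltnS prednK // ltnW. Qed.

Lemma uniform_deviation_not_kstrong (D : {set 'I_n}) (z : strategy R) (k : int) :
  valid_strategy z -> (0 < #|D|)%N -> #|D|%:Z <= k ->
  pair_score z z - pair_score z truth = partner_gain z ->
  0 < partner_gain z *+ #|D|.-1 - deviation_loss z *+ n.-1 ->
  ~ kstrong_eq Hn Q PS (@truthful_profile R n) k.
Proof.
move=> vz /card_gt0P[i0 i0D] Dk pure gain no_dev; apply: no_dev.
pose S' : profile R n := fun j => if j \in D then z else truth.
have out j : j \notin D -> S' j = truth by rewrite /S' => /negbTE ->.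
have member i : i \in D ->
    0 < exante_utility Hn Q PS S' i - exante_utility Hn Q PS (@truthful_profile R n) i.
  move=> iD; rewrite exante_utility_gain (sum_pair_score_sub _ out) /S' iD.
  rewrite (eq_bigr (fun _ => partner_gain z)) => [|j /andP[jD _]]; last first.
    by rewrite jD pure.
  by rewrite sum_in_neq_const // pmulr_rgt0 // invr_gt0 ltr0n predn_gt0.
exists D, S'; split => //.
- by move=> j; rewrite /S'; case: (j \in D) => //; split; rewrite /is_dist /= ?lexx ?ler01.
- by move=> i /member; rewrite subr_gt0 => /ltW.
- by exists i0 => //; have := member i0 i0D; rewrite subr_gt0.
Qed.

Hypothesis Pdist_lt : Pl < Ph.
Hypothesis PS_proper : strictly_proper PS.

Lemma gap_l_gt0 : 0 < Dl.
Proof.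
by apply: proper_gap_gt0; rewrite ?lt_eqF //; apply: Pdist_is_dist.
Qed.

Lemma gap_h_gt0 : 0 < Dh.
Proof.
by apply: proper_gap_gt0; rewrite ?gt_eqF //; apply: Pdist_is_dist.
Qed.

Lemma score_diff_le : PS true Pl - PS false Pl <= PS true Ph - PS false Ph.
Proof. by apply/ltW/proper_diff_lt => //; apply: Pdist_is_dist. Qed.

Lemma truthful_kstrong_kE : kstrong_eq Hn Q PS (@truthful_profile R n) (kE Hn Q PS).
Proof.
case=> D [S' [hk valid out hge [i0 i0D hgt]]].
have d0 : (0 < #|D|)%N by apply/card_gt0P; exists i0.
move: hk; rewrite /kE !le_min => /andP[kh /andP[kl _]].
have sh := threshold_le (mulr_ge0 (ler0n _ _) (ltW gap_l_gt0)) d0 kh.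
have sl := threshold_le (mulr_ge0 (ler0n _ _) (ltW gap_h_gt0)) d0 kl.
have : 0 < \sum_(i in D)
    (exante_utility Hn Q PS S' i - exante_utility Hn Q PS (@truthful_profile R n) i).
  rewrite (bigD1 i0) //=; have := hgt; rewrite -subr_gt0.
  have : 0 <= \sum_(i in D | i != i0)
      (exante_utility Hn Q PS S' i - exante_utility Hn Q PS (@truthful_profile R n) i).
    by apply: sumr_ge0 => i /andP[iD _]; rewrite subr_ge0 hge.
  lra.
rewrite (eq_bigr _ (fun i _ => exante_utility_gain S' i)) -mulr_sumr.
rewrite pmulr_rgt0 ?invr_gt0 ?ltr0n ?predn_gt0 // ltNge.
apply/negP/negPn/(le_trans (coalition_gain_le valid out score_diff_le)).
apply: sumr_le0 => i _; rewrite member_gainE.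
have [/andP[u10 _] /andP[_ u21]] := valid i.
rewrite -[0]addr0; apply: lerD; apply: mulr_ge0_le0;
  by rewrite ?mulr_ge0 ?subr_ge0 ?subr_le0 // ltW.
Qed.

Lemma truthful_not_kstrong (k : int) : kE Hn Q PS < k -> k <= n%:Z ->
  ~ kstrong_eq Hn Q PS (@truthful_profile R n) k.
Proof.
move=> + kn; rewrite /kE !gt_min => /or3P[hk|hk|]; last by rewrite ltNge kn.
- have [d [d0 dk gain]] := threshold_lt (mulr_ge0 (ler0n _ _) (ltW gap_l_gt0)) kn hk.
  have [D cD] : exists D : {set 'I_n}, #|D| = d.
    by apply: exists_card_set; rewrite -lez_nat (le_trans dk kn).
  apply: (@uniform_deviation_not_kstrong D (1, 1)); rewrite ?cD //.
  + by split; rewrite /is_dist /= lexx ler01.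
  + exact: pair_score_pure (or_intror erefl).
  + by rewrite member_gainE /= subrr !mul0r addr0 mul1r pmulr_rgt0 // subr_gt0.
- have [d [d0 dk gain]] := threshold_lt (mulr_ge0 (ler0n _ _) (ltW gap_h_gt0)) kn hk.
  have [D cD] : exists D : {set 'I_n}, #|D| = d.
    by apply: exists_card_set; rewrite -lez_nat (le_trans dk kn).
  apply: (@uniform_deviation_not_kstrong D (0, 0)); rewrite ?cD //.
  + by split; rewrite /is_dist /= lexx ler01.
  + exact: pair_score_pure (or_introl erefl).
  + by rewrite member_gainE /= !mul0r add0r subr0 mul1r pmulr_rgt0 // subr_gt0.
Qed.

End PeerPrediction.

Theorem theorem1 (R : realType) (n : nat) (Hn : (1 < n)%N)
    (Q : signals n -> R) (PS : bool -> R -> R) :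
  symmetric_prior Q ->
  0 < Pmarg Hn Q false -> 0 < Pmarg Hn Q true ->
  Pcond Hn Q true true > Pcond Hn Q true false ->
  0 < Pcond Hn Q true false -> 0 < Pcond Hn Q false true ->
  strictly_proper PS ->
  kstrong_eq Hn Q PS (@truthful_profile R n) (kE Hn Q PS) /\
  (forall k : int, kE Hn Q PS < k -> k <= n%:Z ->
     ~ kstrong_eq Hn Q PS (@truthful_profile R n) k).
Proof.
move=> HQ marg_l marg_h Pdist_lt _ _ PS_proper.
have Pmarg_gt0 : forall s, 0 < Pmarg Hn Q s by case.
split; first exact: truthful_kstrong_kE.
by move=> k; apply: truthful_not_kstrong.
Qed.
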